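(* With notation as in the context, for all $1\le i,j\le m+n$ and $1\le r\le\ell$, $$\mu(t^{(r)}_{ij;\mathfrak{b}})=\sum_{1\le s_1<\cdots<s_r\le\ell}\ \sum_{1\le i_1,\dots,i_{r-1}\le m+n}(-1)^{|i|+|i_1|+\cdots+|i_{r-1}|}\,e^{[s_1]}_{i,i_1}e^{[s_2]}_{i_1,i_2}\cdots e^{[s_r]}_{i_{r-1},j}.$$
   Context: Let $m,n,\ell$ be non-negative integers and $\mathfrak{b}=(\mathfrak{b}_1,\dots,\mathfrak{b}_{m+n})$ a sequence with $m$ entries $\delta$ and $n$ entries $\epsilon$; $|i|=\bar0$ if $\mathfrak{b}_i=\delta$, $|i|=\bar1$ if $\mathfrak{b}_i=\epsilon$. Let $\pi$ be a rectangular array of boxes with $m+n$ rows (top to bottom) and $\ell$ columns (left to right), row $i$ of parity $|i|$; for a box $a$ write $\mathrm{row}(a)$, $\mathrm{col}(a)$, $|a|:=|\mathrm{row}(a)|$, and let $i\star c$ be the box in row $i$, column $c$. Let $V=\mathbb{C}^{M|N}$ ($M=m\ell$, $N=n\ell$) have homogeneous basis $\{v_a\}$ indexed by boxes, $v_a$ of parity $|a|$; $\mathfrak{g}=\mathfrak{gl}_{M|N}=\mathrm{End}(V)$ with matrix units $e_{a,b}$. Let $\mathfrak{p}=\mathrm{span}\{e_{a,b}:\mathrm{col}(a)\le\mathrm{col}(b)\}$ and $\mathfrak{h}=\mathrm{span}\{e_{a,b}:\mathrm{col}(a)=\mathrm{col}(b)\}\cong\mathfrak{gl}_{m|n}^{\oplus\ell}$,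 with basis $e^{[c]}_{i,j}:=e_{i\star c,\,j\star c}$. Let $\xi:U(\mathfrak{p})\to U(\mathfrak{h})$ be the algebra homomorphism induced by the projection $\mathfrak{p}\to\mathfrak{h}$ with kernel $\mathrm{span}\{e_{a,b}:\mathrm{col}(a)<\mathrm{col}(b)\}$. For $1\le c\le\ell$ put $\rho_c=-(\ell-c)(m-n)$, and let $\eta:U(\mathfrak{h})\to U(\mathfrak{h})$ be the algebra automorphism with $e^{[c]}_{i,j}\mapsto e^{[c]}_{i,j}-\delta_{ij}(-1)^{|i|}\rho_c$. Set $\mu=\eta\circ\xi$. Let $\tilde e_{a,b}=(-1)^{\mathrm{col}(b)-\mathrm{col}(a)}(e_{a,b}+\delta_{ab}(-1)^{|a|}\rho_{\mathrm{col}(a)})$, and for $1\le r\le\ell$ let $t^{(r)}_{ij;\mathfrak{b}}=\sum_{s=1}^r\sum(-1)^{|a_1|+\cdots+|a_s|}\tilde e_{a_1,b_1}\cdots\tilde e_{a_s,b_s}\in U(\mathfrak{p})$, the inner sum over boxes $a_1,\dots,a_s,b_1,\dots,b_s$ with $\sum_t(\mathrm{col}(b_t)-\mathrm{col}(a_t)+1)=r$; $\mathrm{col}(a_t)\le\mathrm{col}(b_t)$ for all $t$; $\mathrm{col}(b_t)<\mathrm{col}(a_{t+1})$ and $\mathrm{row}(b_t)=\mathrm{row}(a_{t+1})$ for $t<s$; $\mathrm{row}(a_1)=i$, $\mathrm{row}(b_s)=j$. *)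

From HB Require Import structures.
From mathcomp Require Import all_boot all_order all_algebra.
From mathcomp Require Export algC.
Set Implicit Arguments. Unset Strict Implicit. Unset Printing Implicit Defensive.
Import Order.TTheory GRing.Theory Num.Theory.
Local Open Scope ring_scope.

(* Conventions (0-based): rows are 'I_(m+n), columns are 'I_l.
   par i = true  iff  b_i = epsilon (odd), false iff b_i = delta (even).
   A box is a pair (row, column). *)
Definition box (m n l : nat) := ('I_(m + n) * 'I_l)%type.

(* rho_c = -(l - c)(m - n) for the 1-based column c; here c is 0-based,
   so the 1-based column is c.+1. *)
Definition rho (l m n : nat) (c : 'I_l) : int :=
  - ((l - c.+1)%:Z * (m%:Z - n%:Z)).

Definition etilde {A : pzRingType} (m n l : nat) (par : 'I_(m + n) -> bool)
  (E : box m n l -> box m n l -> A) (a b : box m n l) : A :=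
  (-1) ^+ (b.2 - a.2)%N *
    (E a b + (a == b)%:R * (-1) ^+ par a.1 * (@rho l m n a.2)%:~R).

(* admissible data (a_1,b_1,...,a_s,b_s) for t^{(r)}_{ij}, f k = (a_{k+1}, b_{k+1}) *)
Definition t_adm (m n l r s : nat) (i j : 'I_(m + n))
  (f : {ffun 'I_s -> box m n l * box m n l}) : bool :=
  [&& (\sum_(k < s) ((f k).2.2 - (f k).1.2 + 1))%N == r,
      [forall k : 'I_s, ((f k).1.2 <= (f k).2.2)%N],
      [forall k : 'I_s, forall k' : 'I_s, (k.+1 == k' :> nat) ==>
          ((((f k).2.2 < (f k').1.2)%N) && ((f k).2.1 == (f k').1.1))],
      [forall k : 'I_s, (k == 0 :> nat) ==> ((f k).1.1 == i)] &
      [forall k : 'I_s, (k.+1 == s :> nat) ==> ((f k).2.1 == j)]].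

(* t^{(r)}_{ij;b} in an algebra containing the generators E a b = e_{a,b} *)
Definition t_elem {A : pzRingType} (m n l : nat) (par : 'I_(m + n) -> bool)
  (E : box m n l -> box m n l -> A) (r : nat) (i j : 'I_(m + n)) : A :=
  \sum_(1 <= s < r.+1)
    \sum_(f : {ffun 'I_s -> box m n l * box m n l} | @t_adm m n l r s i j f)
      (-1) ^+ (\sum_(k < s) par (f k).1.1)%N *
      \prod_(k < s) etilde par E (f k).1 (f k).2.

(* the right-hand side, written with E c i j = e^{[c]}_{i,j};
   g encodes (i = i_0, i_1, ..., i_{r-1}, i_r = j) *)
Definition rhs_elem {A : pzRingType} (m n l : nat) (par : 'I_(m + n) -> bool)
  (E : 'I_l -> 'I_(m + n) -> 'I_(m + n) -> A) (r : nat) (i j : 'I_(m + n)) : A :=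
  \sum_(s : {ffun 'I_r -> 'I_l} |
          [forall k : 'I_r, forall k' : 'I_r, (k < k')%N ==> (s k < s k')%N])
    \sum_(g : {ffun 'I_r.+1 -> 'I_(m + n)} | (g ord0 == i) && (g ord_max == j))
      (-1) ^+ (\sum_(k < r) par (g (widen_ord (leqnSn r) k)))%N *
      \prod_(k < r) E (s k) (g (widen_ord (leqnSn r) k)) (g (lift ord0 k)).

From HB Require Import structures.
From mathcomp Require Import all_boot all_order all_algebra algC.
Set Implicit Arguments. Unset Strict Implicit. Unset Printing Implicit Defensive.
Import Order.TTheory GRing.Theory Num.Theory.
Local Open Scope ring_scope.

(* Under mu = eta \o xi, etilde_{a,b} goes to e^{[c]}_{row a, row b} when a and b lie in
   the same column c and to 0 otherwise: eta exactly undoes the shift by rho built into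
   etilde.  In a summand of t^{(r)} with s factors the column gaps col(b_t) - col(a_t) add
   up to r - s, so for s < r some factor has a positive gap and the summand dies.  For
   s = r all factors are column-diagonal, and the admissible data are then exactly the
   strictly increasing column sequences s_1 < ... < s_r paired with the row paths
   i = i_0, i_1, ..., i_r = j. *)

Lemma prodr_mem_eq0 (R : pzSemiRingType) (I : eqType) (r : seq I) (F : I -> R) x :
  x \in r -> F x = 0 -> \prod_(i <- r) F i = 0.
Proof. by case/splitPr=> r1 r2 Fx0; rewrite big_cat big_cons /= Fx0 mul0r mulr0. Qed.

Lemma widen_ordS_lift_max (n : nat) (k : 'I_n) : widen_ord (leqnSn n) k = lift ord_max k.
Proof. by apply: ord_inj; rewrite lift_max. Qed.

Lemma forall_ord_eq (n : nat) (k0 : 'I_n) (P : pred 'I_n) :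
  [forall k : 'I_n, (k == k0 :> nat) ==> P k] = P k0.
Proof. by apply/forall_inP/idP => [-> // | Pk0 k /eqP/ord_inj ->]. Qed.

Lemma forall_ltn_succ (r : nat) (s : 'I_r -> nat) :
  [forall k : 'I_r, forall k' : 'I_r, (k.+1 == k' :> nat) ==> (s k < s k')%N]
  = [forall k : 'I_r, forall k' : 'I_r, (k < k')%N ==> (s k < s k')%N].
Proof.
apply/forallP/forallP => S k; apply/forallP => k'; apply/implyP => lt_kk'; last first.
  by apply: (implyP (forallP (S k) k')); rewrite (eqP lt_kk').
pose s' x := s (insubd k x).
have homo_s' : {in gtn r &, {homo s' : x y / (x < y)%N}}.
  apply: homo_ltn_in => [y x z|x y z /= ltxr ltyr /andP[_ /ltn_trans]|x ltxr ltx1r].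
  - exact: ltn_trans.
  - by apply.
  apply: (implyP (forallP (S (insubd k x)) (insubd k x.+1))).
  by rewrite !insubdK.
by have := homo_s' k k' (ltn_ord k) (ltn_ord k') lt_kk'; rewrite /s' !valKd.
Qed.

Section AdmissibleData.

Variables (m n l : nat).
Implicit Types (i j : 'I_(m + n)) (r s : nat).

Lemma t_adm_col_gaps r s i j (f : {ffun 'I_s -> box m n l * box m n l}) :
  t_adm r i j f -> (s + \sum_(k < s) ((f k).2.2 - (f k).1.2))%N = r.
Proof. by case/and5P=> /eqP <- *; rewrite big_split /= sum1_card card_ord addnC. Qed.

Lemma t_adm_short_gap r s i j (f : {ffun 'I_s -> box m n l * box m n l}) :
  t_adm r i j f -> (s < r)%N -> exists k, ((f k).1.2 < (f k).2.2)%N.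
Proof.
move=> adm lt_sr; apply/existsP; apply: contraLR lt_sr; rewrite negb_exists -leqNgt.
move=> /forallP no_gap; rewrite -(t_adm_col_gaps adm) big1 ?addn0 // => k _.
by apply/eqP; rewrite subn_eq0 leqNgt no_gap.
Qed.

Lemma t_adm_full_diag r i j (f : {ffun 'I_r -> box m n l * box m n l}) k :
  t_adm r i j f -> (f k).1.2 = (f k).2.2.
Proof.
move=> adm; have /eqP := t_adm_col_gaps adm.
rewrite -[X in _ == X]addn0 eqn_add2l sum_nat_eq0 => /forallP/(_ k)/=.
rewrite subn_eq0 => le21; apply/ord_inj/eqP; rewrite eqn_leq le21 andbT.
by case/and5P: adm => _ /forallP ->.
Qed.

Lemma t_adm_chain r s i j (f : {ffun 'I_s -> box m n l * box m n l}) (k k' : 'I_s) :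
  t_adm r i j f -> k.+1 = k' -> (f k).2.1 = (f k').1.1.
Proof.
case/and5P=> _ _ /forallP/(_ k)/forallP/(_ k')/implyP chain _ _ kk'.
by case/andP: (chain (introT eqP kk')) => _ /eqP.
Qed.

Definition diag_data r (p : {ffun 'I_r -> 'I_l} * {ffun 'I_r.+1 -> 'I_(m + n)})
  : {ffun 'I_r -> box m n l * box m n l} :=
  [ffun k => ((p.2 (widen_ord (leqnSn r) k), p.1 k), (p.2 (lift ord0 k), p.1 k))].

Definition diag_data_inv r (f : {ffun 'I_r.+1 -> box m n l * box m n l})
  : {ffun 'I_r.+1 -> 'I_l} * {ffun 'I_r.+2 -> 'I_(m + n)} :=
  ([ffun k => (f k).1.2],
   [ffun k => if unlift ord_max k is Some k' then (f k').1.1 else (f ord_max).2.1]).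

Lemma diag_data_bij r i j :
  {on [pred f | t_adm r.+1 i j f], bijective (@diag_data r.+1)}.
Proof.
exists (@diag_data_inv r) => [[s g] _ | f]; rewrite /diag_data_inv.
  congr pair; apply/ffunP=> k; rewrite !ffunE //.
  case: unliftP => [k'|] ->; rewrite ?ffunE /= ?widen_ordS_lift_max //.
  by congr (g _); apply: ord_inj.
rewrite inE => adm; apply/ffunP=> k; rewrite !ffunE widen_ordS_lift_max liftK.
move: (t_adm_full_diag k adm).
case: (unliftP ord_max (lift ord0 k)) => [k' |] /(congr1 (@nat_of_ord _)).
  rewrite lift0 lift_max => /(t_adm_chain adm) <-.
  by case: (f k) => [[? ?] [? ?]] /= ->.
rewrite lift0 => /eq_add_S k_max; rewrite (_ : k = ord_max); last exact: ord_inj.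
by case: (f ord_max) => [[? ?] [? ?]] /= ->.
Qed.

Lemma t_adm_diag_data r i j (p : {ffun 'I_r.+1 -> 'I_l} * {ffun 'I_r.+2 -> 'I_(m + n)}) :
  t_adm r.+1 i j (diag_data p)
  = [forall k : 'I_r.+1, forall k' : 'I_r.+1, (k < k')%N ==> (p.1 k < p.1 k')%N]
    && ((p.2 ord0 == i) && (p.2 ord_max == j)).
Proof.
case: p => s g; rewrite /t_adm /=.
have -> : (\sum_(k < r.+1) ((diag_data (s, g) k).2.2 - (diag_data (s, g) k).1.2 + 1) == r.+1)%N.
  by rewrite (eq_bigr (fun=> 1%N)) ?sum1_card ?card_ord // => k _; rewrite ffunE subnn.
have -> : [forall k, ((diag_data (s, g) k).1.2 <= (diag_data (s, g) k).2.2)%N].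
  by apply/forallP => k; rewrite ffunE.
rewrite -forall_ltn_succ (forall_ord_eq ord0) (forall_ord_eq ord_max) !ffunE /=.
rewrite (_ : widen_ord (leqnSn r.+1) ord0 = ord0); last by apply: ord_inj.
rewrite (_ : lift ord0 (@ord_max r) = ord_max); last by apply: ord_inj.
congr (_ && _); apply: eq_forallb => k; apply: eq_forallb => k'; rewrite !ffunE /=.
case: eqP => //= kk'; rewrite (_ : lift ord0 k = widen_ord (leqnSn r.+1) k') ?eqxx ?andbT //.
by apply: ord_inj; rewrite lift0 kk'.
Qed.

End AdmissibleData.

Section ImageUnderMu.

Variables (m n l : nat) (par : 'I_(m + n) -> bool) (Up Uh : pzRingType).
Variables (Ep : box m n l -> box m n l -> Up) (Eh : 'I_l -> 'I_(m + n) -> 'I_(m + n) -> Uh).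
Variables (xi : {rmorphism Up -> Uh}) (eta : {rmorphism Uh -> Uh}).
Hypothesis xiE : forall a b : box m n l, (a.2 <= b.2)%N ->
  xi (Ep a b) = if a.2 == b.2 then Eh a.2 a.1 b.1 else 0.
Hypothesis etaE : forall (c : 'I_l) (i j : 'I_(m + n)),
  eta (Eh c i j) = Eh c i j - (i == j)%:R * (-1) ^+ par i * (rho m n c)%:~R.

Lemma mu_etilde (a b : box m n l) : (a.2 <= b.2)%N ->
  eta (xi (etilde par Ep a b)) = if a.2 == b.2 then Eh a.2 a.1 b.1 else 0.
Proof.
case: a b => [a1 a2] [b1 b2] /= le_ab.
rewrite !rmorphM !rmorphD !rmorphM !rmorph_sign !rmorph_nat !rmorph_int xiE //=.
have [<- | ne_ab] := eqVneq a2 b2.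
  by rewrite subnn expr0 mul1r xpair_eqE eqxx andbT etaE subrK.
by rewrite xpair_eqE (negbTE ne_ab) andbF !mul0r rmorph0 add0r mulr0.
Qed.

Lemma mu_t_term_short r s i j (f : {ffun 'I_s -> box m n l * box m n l}) :
  t_adm r i j f -> (s < r)%N ->
  eta (xi ((-1) ^+ (\sum_(k < s) par (f k).1.1) * \prod_(k < s) etilde par Ep (f k).1 (f k).2))
  = 0.
Proof.
move=> adm /(t_adm_short_gap adm) [k gap].
rewrite !rmorphM !rmorph_prod (prodr_mem_eq0 (mem_index_enum k)) ?mulr0 //.
rewrite mu_etilde ?(ltnW gap) //; case: eqP gap => [-> | _ //]; by rewrite ltnn.
Qed.

Lemma mu_t_term_diag r (p : {ffun 'I_r -> 'I_l} * {ffun 'I_r.+1 -> 'I_(m + n)}) :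
  let f := diag_data p in
  eta (xi ((-1) ^+ (\sum_(k < r) par (f k).1.1) * \prod_(k < r) etilde par Ep (f k).1 (f k).2))
  = (-1) ^+ (\sum_(k < r) par (p.2 (widen_ord (leqnSn r) k)))
    * \prod_(k < r) Eh (p.1 k) (p.2 (widen_ord (leqnSn r) k)) (p.2 (lift ord0 k)).
Proof.
rewrite /= !rmorphM !rmorph_sign !rmorph_prod; congr (_ ^+ _ * _).
  by apply: eq_bigr => k _; rewrite ffunE.
by apply: eq_bigr => k _; rewrite ffunE mu_etilde //= eqxx.
Qed.

End ImageUnderMu.

Theorem lemma4p3 (m n l : nat) (par : 'I_(m + n) -> bool)
  (Hpar : #|[set i | par i]| = n)
  (Up Uh : algType algC)
  (Ep : box m n l -> box m n l -> Up)
  (Eh : 'I_l -> 'I_(m + n) -> 'I_(m + n) -> Uh)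
  (HEp : forall a b c d : box m n l, (a.2 <= b.2)%N -> (c.2 <= d.2)%N ->
     Ep a b * Ep c d
       - (-1) ^+ ((par a.1 + par b.1) * (par c.1 + par d.1))%N * (Ep c d * Ep a b)
     = (b == c)%:R * Ep a d
       - (-1) ^+ ((par a.1 + par b.1) * (par c.1 + par d.1))%N * (a == d)%:R * Ep c b)
  (HEh : forall (c c' : 'I_l) (i j k h : 'I_(m + n)),
     Eh c i j * Eh c' k h
       - (-1) ^+ ((par i + par j) * (par k + par h))%N * (Eh c' k h * Eh c i j)
     = (c == c')%:R * ((j == k)%:R * Eh c i h
       - (-1) ^+ ((par i + par j) * (par k + par h))%N * (i == h)%:R * Eh c k j))
  (xi : {rmorphism Up -> Uh})
  (Hxi : forall a b : box m n l, (a.2 <= b.2)%N ->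
     xi (Ep a b) = if a.2 == b.2 then Eh a.2 a.1 b.1 else 0)
  (eta : {rmorphism Uh -> Uh})
  (Heta : forall (c : 'I_l) (i j : 'I_(m + n)),
     eta (Eh c i j) = Eh c i j - (i == j)%:R * (-1) ^+ par i * (@rho l m n c)%:~R)
  (i j : 'I_(m + n)) (r : nat) (Hr1 : (1 <= r)%N) (Hrl : (r <= l)%N) :
  eta (xi (t_elem par Ep r i j)) = rhs_elem par Eh r i j.
Proof.
case: r Hr1 Hrl => // r _ _.
rewrite /t_elem !rmorph_sum big_nat_recr //= big_nat_cond big1 ?add0r; last first.
  move=> s /andP[/andP[_ lt_sr] _]; rewrite !rmorph_sum big1 // => f adm.
  exact: (mu_t_term_short Hxi Heta adm lt_sr).
rewrite !rmorph_sum /rhs_elem pair_big_dep (reindex _ (diag_data_bij l r i j)).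
apply: eq_big => p; first exact: t_adm_diag_data.
by move=> _; apply: (mu_t_term_diag Hxi Heta).
Qed.
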